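(* Let $t\in\mathbb{R}^d$, $h>0$, and $\kappa_t:\mathbb{R}^d\to\mathbb{R}_{\ge0}$, $\kappa_t(x)=e^{-\frac{\|x-t\|^2}{2h^2}}$, with $\mathbb{R}^d$ carrying the Euclidean metric. Let $g(x,x')=g_0(\|x-x'\|)$ be a smooth growth function. Let $(w^*,z^* )$ with $w^*\ne z^*$ be such that $B^*(t)=\frac{|\kappa_t(w^* )-\kappa_t(z^* )|}{\|w^*-z^*\|\,g(t,z^* )}$, and assume $z^*\ne t$. Then there is a point $w_L$ on the line connecting $z^*$ and $t$ such that $\frac{|\kappa_t(w_L)-\kappa_t(z^* )|}{\|w_L-z^*\|\,g(t,z^* )}\ge B^*(t)$.
   Context: A smooth growth function is $g(x,x')=g_0(\|x-x'\|)$ with $g_0:\mathbb{R}_{\ge0}\to\mathbb{R}_{\ge1}$ monotonically increasing, $g_0(0)=1$, $g_0(r_1+r_2)\le g_0(r_1)g_0(r_2)$. $B^*(t)$ denotes the $g$-smooth sensitivity of $\kappa_t$ at the point $t$. *)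

From HB Require Import structures.
From mathcomp Require Import all_boot all_order all_algebra.
From mathcomp Require Import all_classical all_reals all_analysis.
Set Implicit Arguments. Unset Strict Implicit. Unset Printing Implicit Defensive.
Import Order.TTheory GRing.Theory Num.Theory.
Local Open Scope classical_set_scope.
Local Open Scope ring_scope.

Definition enorm {R : realType} {d : nat} (x : 'rV[R]_d) : R :=
  Num.sqrt (\sum_(i < d) (x ord0 i) ^+ 2).

Definition kappa {R : realType} {d : nat} (h : R) (t x : 'rV[R]_d) : R :=
  expR (- (enorm (x - t) ^+ 2) / (2 * h ^+ 2)).

Definition smooth_growth {R : realType} (g0 : R -> R) : Prop :=
  [/\ g0 0 = 1,
      (forall r, 0 <= r -> 1 <= g0 r),
      (forall r1 r2, 0 <= r1 -> r1 <= r2 -> g0 r1 <= g0 r2) &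
      (forall r1 r2, 0 <= r1 -> 0 <= r2 -> g0 (r1 + r2) <= g0 r1 * g0 r2)].

Definition growth {R : realType} {d : nat} (g0 : R -> R) (x x' : 'rV[R]_d) : R :=
  g0 (enorm (x - x')).

Definition sens_ratio {R : realType} {d : nat} (h : R) (g0 : R -> R)
  (t w z : 'rV[R]_d) : R :=
  `|kappa h t w - kappa h t z| / (enorm (w - z) * growth g0 t z).

(* g-smooth sensitivity of kappa_t at t:
   B*(t) = sup_z LS(z)/g(t,z) = sup_{w <> z} |kappa_t(w)-kappa_t(z)| / (||w-z|| g(t,z)) *)
Definition smooth_sens {R : realType} {d : nat} (h : R) (g0 : R -> R)
  (t : 'rV[R]_d) : R :=
  sup [set r | exists w z : 'rV[R]_d, w != z /\ r = sens_ratio h g0 t w z].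

(** The Gaussian kernel [kappa_t] is radial, so [kappa_t w*] only depends on
    [rho = ||w* - t||].  The point [w_L] of the line through [z*] and [t] at
    distance [rho] from [t], on the side of [z*], has [kappa_t w_L = kappa_t w*]
    while [||w_L - z*|| = | ||z* - t|| - rho |], which by the reverse triangle
    inequality is at most [||w* - z*||].  Hence the ratio at [w_L] has the
    same numerator and a smaller denominator.  When [rho = ||z* - t||] the
    numerator vanishes, [B*(t) = 0], and [w_L := t] does the job. *)

From HB Require Import structures.
From mathcomp Require Import all_boot all_order all_algebra.
From mathcomp Require Import all_classical all_reals all_analysis.
From mathcomp Require Import ring lra.
Set Implicit Arguments. Unset Strict Implicit. Unset Printing Implicit Defensive.
Import Order.TTheory GRing.Theory Num.Theory.
Local Open Scope ring_scope.

Section EuclideanNorm.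
Variables (R : realType) (d : nat).
Implicit Types (u v : 'rV[R]_d).

Lemma enorm_ge0 v : 0 <= enorm v.
Proof. exact: sqrtr_ge0. Qed.

Lemma sumr_sqr_ge0 v : 0 <= \sum_(i < d) v ord0 i ^+ 2.
Proof. by apply: sumr_ge0 => i _; exact: sqr_ge0. Qed.

Lemma enorm_sqr v : enorm v ^+ 2 = \sum_(i < d) v ord0 i ^+ 2.
Proof. by rewrite sqr_sqrtr // sumr_sqr_ge0. Qed.

Lemma enorm_eq0 v : (enorm v == 0) = (v == 0).
Proof.
rewrite sqrtr_eq0 le_eqVlt ltNge sumr_sqr_ge0 orbF.
rewrite psumr_eq0 => [|i _]; last exact: sqr_ge0.
apply/idP/idP => [/allP v0|/eqP ->].
  by apply/eqP/rowP => i; rewrite mxE; apply/eqP; rewrite -sqrf_eq0 (implyP (v0 i _)).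
by apply/allP => i _; rewrite mxE sqrf_eq0 eqxx.
Qed.

Lemma enorm_gt0 v : (0 < enorm v) = (v != 0).
Proof. by rewrite lt_def enorm_eq0 enorm_ge0 andbT. Qed.

Lemma enormZ (a : R) v : enorm (a *: v) = `|a| * enorm v.
Proof.
rewrite /enorm -sqrtr_sqr -sqrtrM ?sqr_ge0 // mulr_sumr.
by congr Num.sqrt; apply: eq_bigr => i _; rewrite mxE exprMn.
Qed.

Lemma enormB u v : enorm (u - v) = enorm (v - u).
Proof. by rewrite -opprB -scaleN1r enormZ normrN1 mul1r. Qed.

Lemma dot_le_enorm u v : \sum_(i < d) u ord0 i * v ord0 i <= enorm u * enorm v.
Proof.
have [->|u0] := eqVneq u 0.
  by rewrite big1 => [|i _]; rewrite ?mxE ?mul0r // mulr_ge0 ?enorm_ge0.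
have [->|v0] := eqVneq v 0.
  by rewrite big1 => [|i _]; rewrite ?mxE ?mulr0 // mulr_ge0 ?enorm_ge0.
have nu : 0 < enorm u by rewrite enorm_gt0.
have nv : 0 < enorm v by rewrite enorm_gt0.
pose k := enorm v / enorm u; have k0 : 0 < k by rewrite divr_gt0.
(* AM-GM termwise: [2 x y <= k x^2 + y^2 / k], summed with [k = ||v|| / ||u||]. *)
have amgm x y : x * y <= (k * x ^+ 2 + k^-1 * y ^+ 2) / 2.
  rewrite ler_pdivlMr // -subr_ge0.
  have -> : k * x ^+ 2 + k^-1 * y ^+ 2 - x * y * 2 = k^-1 * (k * x - y) ^+ 2.
    by field; rewrite gt_eqF.
  by rewrite mulr_ge0 ?sqr_ge0 // invr_ge0 ltW.
apply: le_trans (ler_sum _ (fun i _ => amgm (u ord0 i) (v ord0 i))) _.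
rewrite -mulr_suml big_split /= -!mulr_sumr -!enorm_sqr /k.
rewrite [leLHS](_ : _ = enorm u * enorm v) //.
by field; rewrite !gt_eqF.
Qed.

Lemma enorm_dist_ge u v : `|enorm u - enorm v| <= enorm (u - v).
Proof.
rewrite -sqrtr_sqr ler_sqrt ?sumr_sqr_ge0 //.
have -> : \sum_(i < d) (u - v) ord0 i ^+ 2 = enorm u ^+ 2 + enorm v ^+ 2
    - 2 * \sum_(i < d) u ord0 i * v ord0 i.
  rewrite !enorm_sqr mulr_sumr -big_split -sumrN -big_split /=.
  by apply: eq_bigr => i _; rewrite !mxE; ring.
have := dot_le_enorm u v; nra.
Qed.

Lemma line_point_enorm (z t : 'rV[R]_d) (rho : R) :
  z != t -> 0 <= rho ->
  let w := z + (1 - rho / enorm (z - t)) *: (t - z) in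
  enorm (w - t) = rho /\ enorm (w - z) = `|enorm (z - t) - rho|.
Proof.
move=> zt rho0 /=; set r := enorm (z - t).
have r0 : 0 < r by rewrite enorm_gt0 subr_eq0.
split.
  have -> : z + (1 - rho / r) *: (t - z) - t = (rho / r) *: (z - t).
    by apply/rowP => i; rewrite !mxE; ring.
  by rewrite enormZ -/r ger0_norm ?divfK ?gt_eqF // divr_ge0 // ltW.
rewrite addrAC subrr add0r enormZ enormB -/r -[X in _ * X]ger0_norm ?ltW //.
by rewrite -normrM mulrBl mul1r divfK ?gt_eqF.
Qed.

End EuclideanNorm.

Section SensitivityRatio.
Variables (R : realType) (d : nat) (h : R) (g0 : R -> R).
Hypothesis g0_growth : smooth_growth g0.
Implicit Types (t w z : 'rV[R]_d).

Lemma kappa_dist t w w' :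
  enorm (w - t) = enorm (w' - t) -> kappa h t w = kappa h t w'.
Proof. by rewrite /kappa => ->. Qed.

Lemma growth_gt0 (x x' : 'rV[R]_d) : 0 < growth g0 x x'.
Proof.
by case: g0_growth => _ g0_ge1 _ _; rewrite (lt_le_trans ltr01) ?g0_ge1 ?enorm_ge0.
Qed.

Lemma sens_ratio_ge0 t w z : 0 <= sens_ratio h g0 t w z.
Proof. by rewrite divr_ge0 // mulr_ge0 ?enorm_ge0 ?ltW ?growth_gt0. Qed.

Lemma sens_ratio_kappa_eq0 t w z :
  kappa h t w = kappa h t z -> sens_ratio h g0 t w z = 0.
Proof. by rewrite /sens_ratio => ->; rewrite subrr normr0 mul0r. Qed.

Lemma sens_ratio_le_closer t w w' z :
  kappa h t w = kappa h t w' -> 0 < enorm (w' - z) <= enorm (w - z) ->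
  sens_ratio h g0 t w z <= sens_ratio h g0 t w' z.
Proof.
move=> kw /andP[w'z0 le_w'z]; rewrite /sens_ratio kw ler_wpM2l //.
have G0 := growth_gt0 t z; have wz0 := lt_le_trans w'z0 le_w'z.
by rewrite lef_pV2 ?posrE ?mulr_gt0 // ler_pM2r.
Qed.

End SensitivityRatio.

Theorem mainTheorem13 (R : realType) (d : nat) (t : 'rV[R]_d) (h : R)
  (g0 : R -> R) (ws zs : 'rV[R]_d) :
  0 < h -> smooth_growth g0 -> ws != zs ->
  smooth_sens h g0 t = sens_ratio h g0 t ws zs ->
  zs != t ->
  exists s : R,
    let wL := zs + s *: (t - zs) in
    wL != zs /\ smooth_sens h g0 t <= sens_ratio h g0 t wL zs.
Proof.
move=> _ g0_growth _ -> zt.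
set r := enorm (zs - t); set rho := enorm (ws - t).
have [rho_r|rho_r] := eqVneq rho r.
  exists 1 => /=; rewrite scale1r addrC subrK eq_sym; split=> //.
  by rewrite sens_ratio_kappa_eq0 ?sens_ratio_ge0 //; apply: kappa_dist; exact: rho_r.
exists (1 - rho / r) => /=.
have [wt wz] := line_point_enorm zt (enorm_ge0 (ws - t)).
have wz0 : 0 < enorm (zs + (1 - rho / r) *: (t - zs) - zs).
  by rewrite wz normr_gt0 subr_eq0 eq_sym.
split; first by rewrite -subr_eq0 -enorm_eq0 gt_eqF.
apply: (sens_ratio_le_closer g0_growth); first by apply: kappa_dist; rewrite wt.
have -> : ws - zs = (ws - t) - (zs - t) by rewrite opprB addrA subrK.
by rewrite wz0 wz distrC enorm_dist_ge.
Qed.
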